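(* Let $k_1,\dots,k_d$ be distinct elements of $[n-1]$ and let $k=\min\{k_1,\dots,k_d\}$. If there is a chain $(w=v_1,v_2,\dots,v_{d+1}=w_0)$ compatible with $(k_1,\dots,k_d)$, then $w(i)=n+1-i$ for all $i\in[k-1]$.
   Context: Permutations in one-line notation; $w_0=[n,\dots,1]$; $wt_{i,j}$ is $w$ with positions $i<j$ swapped; $\ell$ the number of inversions. $u\lessdot w$ iff $w=ut_{i,j}$, $i<j$, $\ell(w)=\ell(u)+1$; $u\lessdot_k w$ iff moreover $i\le k<j$. A $k$-chain $v_1\lessdot_k\cdots\lessdot_k v_m$ ($m\ge1$) is increasing if the smaller of the two values exchanged at each step strictly increases along the chain. $(v_1,\dots,v_{d+1})$ is compatible with $(k_1,\dots,k_d)$ if for each $s$ there is an increasing $k_s$-chain from $v_s$ to $v_{s+1}$. *)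

(* Permutations of [n] are 'S_n = {perm 'I_n}.
   Convention: position p in {1..n} is the ordinal i with i.+1 = p, and the
   one-line value w(p) is (w i).+1 (ordinals are 0-based). *)
From mathcomp Require Import all_boot all_order all_fingroup.
Set Implicit Arguments. Unset Strict Implicit. Unset Printing Implicit Defensive.

Section Perms.
Variable n : nat.

Definition ell (w : 'S_n) : nat :=
  #|[set p : 'I_n * 'I_n | (p.1 < p.2) && (w p.2 < w p.1)]|.

(* w t_{i,j} : w with positions i and j swapped; (swap w i j) x = w (tperm i j x) *)
Definition swap (w : 'S_n) (i j : 'I_n) : 'S_n := (tperm i j * w)%g.

Definition w0 : 'S_n := perm (@rev_ord_inj n).

Definition kcover_at (k : nat) (u w : 'S_n) (i j : 'I_n) : Prop :=
  [/\ i < j, w = swap u i j, ell w = (ell u).+1 & i.+1 <= k < j.+1].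

Definition label (u : 'S_n) (i j : 'I_n) : nat := minn (u i).+1 (u j).+1.

Fixpoint inc_kchain_from (k : nat) (v : 'S_n) (lo : nat)
    (p : seq ('I_n * 'I_n)) (v' : 'S_n) : Prop :=
  match p with
  | [::] => v = v'
  | (i, j) :: p' =>
      kcover_at k v (swap v i j) i j /\ lo <= label v i j /\
      inc_kchain_from k (swap v i j) (label v i j).+1 p' v'
  end.

Definition inc_kchain (k : nat) (v v' : 'S_n) : Prop :=
  exists p : seq ('I_n * 'I_n), inc_kchain_from k v 0 p v'.

Definition compatible (vs : seq 'S_n) (ks : seq nat) : Prop :=
  size vs = (size ks).+1 /\
  forall s, s < size ks ->
    inc_kchain (nth 0 ks s) (nth 1%g vs s) (nth 1%g vs s.+1).

End Perms.

(* Call position i of u a right-to-left maximum if u(x) < u(i) for all x > i;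
   every position of w0 is one.  Walk the chain backwards from w0: if v is
   reached from u by an increasing k-chain, and v has right-to-left maxima at
   k and at some i <> k, then so does u at i.  Along a single cover
   u -> u t_{a,b} with a <= k < b this holds because a cover exchanges an
   ascent u(a) < u(b) with no value strictly between them at a position
   strictly between a and b.  The delicate case i = a is impossible: there
   u(k) < u(b) forces u(k) < u(a), and since all later labels exceed u(a), the
   values u(a) (now at b) and u(k) are never moved again, so v(k) < v(b) with
   k < b.  As k = min k_s, the positions 1, ..., k-1 are right-to-left maxima
   of w, which forces w(i) = n+1-i there. *)
From mathcomp Require Import all_boot all_order all_fingroup.
From mathcomp Require Import zify.
Set Implicit Arguments. Unset Strict Implicit. Unset Printing Implicit Defensive.

Section Inversions.
Variable n : nat.
Implicit Types (u : 'S_n) (a b c p q : 'I_n).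

Definition inversions u : {set 'I_n * 'I_n} :=
  [set pq : 'I_n * 'I_n | (pq.1 < pq.2) && (u pq.2 < u pq.1)].

Lemma ellE u : ell u = #|inversions u|. Proof. by []. Qed.

Lemma swapE u a b x : swap u a b x = u (tperm a b x).
Proof. by rewrite /swap permM. Qed.

Lemma swapK u a b : swap (swap u a b) a b = u.
Proof. by rewrite /swap mulgA tperm2 mul1g. Qed.

Lemma tperm_flip a b p q :
  a < b -> p < q -> tperm a b q < tperm a b p ->
  [|| (p == a) && (q == b), (p == a) && (q < b) | (a < p) && (q == b)].
Proof.
move=> ab; case: tpermP => [->|->|/eqP + /eqP +]; case: tpermP => [->|->|/eqP + /eqP +].
all: rewrite ?eqxx ?andbT /=; lia.
Qed.

Lemma tperm_between a b c : a < c < b -> tperm a b c = c.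
Proof. by case/andP=> ac cb; rewrite tpermD // neq_ltn ?ac ?cb ?orbT. Qed.

Definition swap_pair a b (pq : 'I_n * 'I_n) : 'I_n * 'I_n :=
  let: (p, q) := pq in
  if tperm a b p < tperm a b q then (tperm a b p, tperm a b q) else pq.

Lemma swap_pair_inj a b :
  {in [pred pq : 'I_n * 'I_n | pq.1 < pq.2] &, injective (swap_pair a b)}.
Proof.
move=> [p q] [p' q']; rewrite !inE /= => pq pq'.
case: ifP => tpq; case: ifP => tpq' [e1 e2].
- by rewrite (perm_inj e1) (perm_inj e2).
- by move: tpq'; rewrite -e1 -e2 !tpermK pq.
- by move: tpq; rewrite e1 e2 !tpermK pq'.
- by rewrite e1 e2.
Qed.

Section SwapAscent.
Variables (u : 'S_n) (a b : 'I_n).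
Hypotheses (ab : a < b) (uab : u a < u b).

Definition middle : {set 'I_n} :=
  [set c : 'I_n | (a < c < b) && (u a < u c < u b)].

(* The inversions of [swap u a b] that are missed by the injection
   [swap_pair a b] of the inversions of [u]. *)
Let new_inversions := (a, b) |: (setX [set a] middle :|: setX middle [set b]).

Let new_inversions_flipped pq :
  pq \in new_inversions -> tperm a b pq.2 < tperm a b pq.1.
Proof.
case: pq => p q; rewrite !inE /=.
case/or3P=> [/eqP [-> ->] | /andP [/eqP -> /andP [acb _]] | /andP [/andP [acb _] /eqP ->]].
- by rewrite tpermL tpermR.
- by rewrite tpermL tperm_between //; case/andP: acb.
- by rewrite tpermR tperm_between //; case/andP: acb.
Qed.

Let new_inversions_sub : new_inversions \subset inversions (swap u a b).
Proof.
apply/subsetP=> -[p q]; rewrite !inE /= !swapE.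
case/or3P=> [/eqP [-> ->] | /andP [/eqP -> mid] | /andP [mid /eqP ->]].
- by rewrite tpermL tpermR ab.
- case/andP: mid => /[dup] acb /andP [ac _] /andP [_ ucb].
  by rewrite tpermL tperm_between // ac.
- case/andP: mid => /[dup] acb /andP [_ cb] /andP [uac _].
  by rewrite tpermR tperm_between // cb.
Qed.

Let card_new_inversions : #|new_inversions| = (#|middle|).*2.+1.
Proof.
have abN : (a, b) \notin setX [set a] middle :|: setX middle [set b].
  by rewrite !inE /= !ltnn !andbF.
have disj : setX [set a] middle :&: setX middle [set b] = set0.
  by apply/setP=> -[p q]; rewrite !inE /=; case: eqP => // ->; rewrite ltnn !andbF.
by rewrite cardsU1 abN cardsU disj cards0 !cardsX !cards1 mul1n muln1 subn0 addnn.
Qed.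

Let new_inversions_ascent pq : pq \in new_inversions -> u pq.1 < u pq.2.
Proof.
case: pq => p q; rewrite !inE /=.
by case/or3P=> [/eqP [-> ->] | /andP [/eqP -> /and3P [_ ? ?]] | /andP [/and3P [_ ? ?] /eqP ->]].
Qed.

Let swap_pair_sub :
  swap_pair a b @: inversions u \subset inversions (swap u a b) :\: new_inversions.
Proof.
apply/subsetP=> _ /imsetP [[p q] + ->]; rewrite inE /= => /andP [pq uqp] /=.
case: ifP => tpq.
  rewrite in_setD; apply/andP; split.
    by apply/negP=> /new_inversions_flipped /=; rewrite !tpermK ltnNge ltnW.
  by rewrite inE /= !swapE !tpermK tpq uqp.
rewrite in_setD; apply/andP; split; first by apply/negP=> /new_inversions_ascent /=; lia.
have tqp : tperm a b q < tperm a b p.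
  have : tperm a b p != tperm a b q by rewrite (inj_eq perm_inj) neq_ltn pq.
  by rewrite -val_eqE /=; lia.
rewrite inE /= pq !swapE /=.
case/or3P: (tperm_flip ab pq tqp) => /andP [].
- by move=> /eqP pa /eqP qb; rewrite pa qb in uqp; lia.
- move=> /eqP pa qb; rewrite pa in pq uqp *.
  by rewrite tpermL tperm_between ?pq //; lia.
- move=> ap /eqP qb; rewrite qb in pq uqp *.
  by rewrite tpermR tperm_between ?ap //; lia.
Qed.

Lemma ell_swap_ascent : ell u + (#|middle|).*2 < ell (swap u a b).
Proof.
have inj : {in inversions u &, injective (swap_pair a b)}.
  by move=> x y; rewrite !inE => /andP [x12 _] /andP [y12 _]; apply: swap_pair_inj.
have := subset_leq_card new_inversions_sub; have := subset_leq_card swap_pair_sub.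
rewrite card_in_imset // cardsD (setIidPr new_inversions_sub) card_new_inversions.
by rewrite -!ellE; lia.
Qed.

End SwapAscent.

Lemma cover_ascent u a b : a < b -> ell (swap u a b) = (ell u).+1 -> u a < u b.
Proof.
move=> ab cover; case: (ltngtP (u a) (u b)) => // [uba | /val_inj /perm_inj eab].
  have := ell_swap_ascent (u := swap u a b) ab; rewrite !swapE tpermL tpermR swapK.
  by move=> /(_ uba); lia.
by move: ab; rewrite eab ltnn.
Qed.

Lemma cover_no_middle u a b c :
  a < b -> ell (swap u a b) = (ell u).+1 -> a < c < b -> ~~ (u a < u c < u b).
Proof.
move=> ab cover acb; have uab := cover_ascent ab cover.
have /cards0_eq middle0 : #|middle u a b| = 0 by have := ell_swap_ascent ab uab; lia.
by apply/negP=> ucb; have := in_set0 c; rewrite -middle0 inE acb ucb.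
Qed.

End Inversions.

Section RightToLeftMaxima.
Variable n : nat.
Implicit Types (u v w : 'S_n) (a b i j x : 'I_n).

Definition rl_max u i := forall x, i < x -> u x < u i.

Lemma w0_rl_max i : rl_max (w0 n) i.
Proof. by move=> x ix; rewrite !permE /=; have := ltn_ord x; lia. Qed.

Lemma label_cover u a b :
  a < b -> ell (swap u a b) = (ell u).+1 -> label u a b = (u a).+1.
Proof. by move=> ab /(cover_ascent ab) uab; rewrite /label; lia. Qed.

Lemma inc_kchain_from_fixed k u v lo p x :
  inc_kchain_from k u lo p v -> (u x).+1 < lo -> v x = u x.
Proof.
elim: p u lo => [|[a b] p IH] u lo /=; first by move=> <-.
case=> [[ab _ cover _] [lo_label chain]] small.
rewrite (label_cover ab cover) in lo_label chain.
have uab := cover_ascent ab cover.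
have ax : a != x by apply: contraTneq small => <-; lia.
have bx : b != x by apply: contraTneq small => <-; lia.
have ux : swap u a b x = u x by rewrite swapE tpermD.
by rewrite (IH _ _ chain) ux //; lia.
Qed.

Lemma rl_max_swap_cover u a b i :
  a < b -> ell (swap u a b) = (ell u).+1 ->
  rl_max (swap u a b) i -> i != a -> rl_max u i.
Proof.
move=> ab cover max_i ia x ix; have uab := cover_ascent ab cover.
have max_at (y : 'I_n) : i < y -> u (tperm a b y) < u (tperm a b i).
  by move=> iy; have := max_i y iy; rewrite !swapE.
have [ib | bi] := eqVneq i b.
  have bx : b < x by rewrite -ib.
  have := max_at x ix; rewrite ib tpermR tpermD //; first lia.
  - by rewrite neq_ltn (ltn_trans ab bx).
  - by rewrite neq_ltn bx.
have ti : tperm a b i = i by rewrite tpermD // eq_sym.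
have [xa | ax] := eqVneq x a.
  by rewrite xa in ix *; have := max_at b (ltn_trans ix ab); rewrite tpermR ti.
have [xb | bx] := eqVneq x b; last first.
  by have := max_at x ix; rewrite ti tpermD // eq_sym.
rewrite xb in ix *; have [il | ai] := ltnP i a.
  by have := max_at a il; rewrite tpermL ti.
have {}ai : a < i by rewrite ltn_neqAle eq_sym ia.
have ub_ui : u b != u i by rewrite (inj_eq perm_inj) eq_sym.
have := max_at b ix; have := cover_no_middle ab cover (c := i); rewrite ai ix.
by rewrite tpermR ti; move: ub_ui; rewrite -val_eqE /=; lia.
Qed.

Lemma swap_cover_not_rl_max k u v p a b j :
  a < j < b -> ell (swap u a b) = (ell u).+1 ->
  inc_kchain_from k (swap u a b) (u a).+2 p v -> rl_max v j ->
  ~ rl_max (swap u a b) a.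
Proof.
move=> /[dup] ajb /andP [aj jb] cover chain max_j max_a.
have ab := ltn_trans aj jb; have uab := cover_ascent ab cover.
have ua_uj : u a != u j by rewrite (inj_eq perm_inj) neq_ltn aj.
have uja : u j < u a.
  have := max_a j aj; rewrite !swapE tpermL tperm_between //.
  have := cover_no_middle ab cover ajb.
  by move: ua_uj; rewrite -val_eqE /=; lia.
have vb : v b = u a :> nat.
  by rewrite (inc_kchain_from_fixed chain) swapE tpermR.
have vj : v j = u j :> nat.
  by rewrite (inc_kchain_from_fixed chain) swapE tperm_between //; lia.
by have := max_j b jb; rewrite vb vj; lia.
Qed.

Lemma inc_kchain_from_rl_max k u v lo p i :
  inc_kchain_from k u lo p v -> (forall j, j.+1 = k -> rl_max v j) ->
  rl_max v i -> i.+1 != k -> rl_max u i.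
Proof.
elim: p u lo => [|[a b] p IH] u lo /=; first by move=> <-.
case=> [[ab _ cover /andP [ak kb]] [_ chain]] max_k max_i ik.
rewrite (label_cover ab cover) in chain.
have max_next := IH _ _ chain max_k max_i ik.
apply: (rl_max_swap_cover ab cover max_next).
apply/eqP=> ia; rewrite ia in ik max_next.
have jn : k.-1 < n by have := ltn_ord b; lia.
apply: (swap_cover_not_rl_max (j := Ordinal jn)) cover chain _ max_next => /=.
  by rewrite ltn_predRL; lia.
by apply: max_k => /=; lia.
Qed.

Lemma rl_max_prefix w i :
  (forall j, j <= i -> rl_max w j) -> w i = n.-1 - i :> nat.
Proof.
have [m] := ubnP i; elim: m i => // m IH i /ltnSE le_im max_le.
have IHi j : j < i -> w j = n.-1 - j :> nat.
  by move=> ji; apply: IH => [|l lj]; [lia | apply: max_le; lia].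
have i_lt_n := ltn_ord i; have wi_lt_n := ltn_ord (w i).
have le_wi : w i <= n.-1 - i.
  rewrite leqNgt; apply/negP=> lt_wi.
  have jn : n.-1 - w i < n by lia.
  have wj : w (Ordinal jn) = w i.
    by apply: val_inj => /=; rewrite IHi /=; lia.
  by have := congr1 val (perm_inj wj) => /=; lia.
have zn : n.-1 - i < n by lia.
have wz : w ((w^-1)%g (Ordinal zn)) = Ordinal zn by rewrite permKV.
move: wz; set z := (w^-1)%g _.
have [zi | iz | /val_inj ->] := ltngtP z i => wz.
- by have := IHi z zi; rewrite wz /=; lia.
- by have := max_le i (leqnn i) z iz; rewrite wz /=; lia.
- by rewrite wz.
Qed.

Lemma compatible_rl_max vs ks :
  compatible vs ks -> uniq ks -> (forall j, rl_max (last 1%g vs) j) ->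
  forall i, i.+1 \notin ks -> rl_max (head 1%g vs) i.
Proof.
elim: ks vs => [|k ks IH] [|v vs] [/= size_vs chains] //.
  by case: vs size_vs {chains} => // _ max_last i _; apply: max_last.
case/andP=> k_ks uniq_ks.
case: vs size_vs chains => // v' vs [size_vs] chains max_last i.
rewrite inE negb_or => /andP [ik i_ks].
have [p /= chain] := chains 0 isT.
have compat : compatible (v' :: vs) ks.
  by split=> [|s]; [rewrite /= size_vs | apply: (chains s.+1)].
have max_next := IH _ compat uniq_ks max_last.
apply: (inc_kchain_from_rl_max chain _ _ ik) => [j jk|]; last exact: max_next.
by apply: max_next; rewrite jk.
Qed.

End RightToLeftMaxima.

Theorem lemma5p11 (n : nat) (ks : seq nat) (k : nat) (w : 'S_n)
    (vs : seq 'S_n) :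
  ks != [::] ->
  uniq ks ->
  all (fun x => 1 <= x <= n - 1) ks ->
  k \in ks -> (forall x, x \in ks -> k <= x) ->
  compatible vs ks ->
  head 1%g vs = w -> last 1%g vs = w0 n ->
  forall i : 'I_n, i.+1 <= k - 1 -> (w i).+1 = n + 1 - i.+1.
Proof.
move=> _ uniq_ks _ _ k_min compat <- last_w0 i ik.
have max_prefix (j : 'I_n) : j <= i -> rl_max (head 1%g vs) j.
  move=> ji; apply: (compatible_rl_max compat uniq_ks) => [l|].
    by rewrite last_w0; apply: w0_rl_max.
  by apply/negP=> /k_min; lia.
by rewrite (rl_max_prefix max_prefix); have := ltn_ord i; lia.
Qed.
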